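(* Assume the standing $J$-self-adjoint setting. Assume also that $A_0$ and $A_1$ are bounded, that $d=\mathrm{dist}(\mathrm{spec}(A_0),\mathrm{spec}(A_1))>0$, and that $\|V\|<d/2$. Then $\mathrm{spec}(L)\subset\mathbb R$.
   Context: Standing $J$-self-adjoint setting: - $A_0$ and $A_1$ are self-adjoint operators on Hilbert spaces $\mathfrak H_0$ and $\mathfrak H_1$. - $B\in\mathcal B(\mathfrak H_1,\mathfrak H_0)$. - $\mathfrak H=\mathfrak H_0\oplus\mathfrak H_1$, $A=\mathrm{diag}(A_0,A_1)$, and $V=\begin{pmatrix}0&B\\-B^*&0\end{pmatrix}$. - $L=A+V$, i.e. $L(x_0\oplus x_1)=(A_0x_0+Bx_1)\oplus(-B^*x_0+A_1x_1)$. *)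

From Stdlib Require Import Reals.
Open Scope R_scope.

Record Cplx := mkC { Re : R; Im : R }.
Definition C0 : Cplx := mkC 0 0.
Definition C1 : Cplx := mkC 1 0.
Definition Cadd (z w : Cplx) : Cplx := mkC (Re z + Re w) (Im z + Im w).
Definition Copp (z : Cplx) : Cplx := mkC (- Re z) (- Im z).
Definition Csub (z w : Cplx) : Cplx := Cadd z (Copp w).
Definition Cmul (z w : Cplx) : Cplx :=
  mkC (Re z * Re w - Im z * Im w) (Re z * Im w + Im z * Re w).
Definition Cconj (z : Cplx) : Cplx := mkC (Re z) (- Im z).
Definition Cabs (z : Cplx) : R := sqrt (Re z ^ 2 + Im z ^ 2).

Record Hilbert := {
  hcar :> Type;
  hzero : hcar;
  hadd : hcar -> hcar -> hcar;
  hopp : hcar -> hcar;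
  hscal : Cplx -> hcar -> hcar;
  hinner : hcar -> hcar -> Cplx;
  hadd_assoc : forall x y z, hadd x (hadd y z) = hadd (hadd x y) z;
  hadd_comm : forall x y, hadd x y = hadd y x;
  hadd_0 : forall x, hadd x hzero = x;
  hadd_opp : forall x, hadd x (hopp x) = hzero;
  hscal_1 : forall x, hscal C1 x = x;
  hscal_assoc : forall a b x, hscal (Cmul a b) x = hscal a (hscal b x);
  hscal_addv : forall a x y, hscal a (hadd x y) = hadd (hscal a x) (hscal a y);
  hscal_adds : forall a b x, hscal (Cadd a b) x = hadd (hscal a x) (hscal b x);
  hinner_add : forall x y z, hinner (hadd x y) z = Cadd (hinner x z) (hinner y z);
  hinner_scal : forall a x y, hinner (hscal a x) y = Cmul a (hinner x y);
  hinner_conj : forall x y, hinner y x = Cconj (hinner x y);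
  hinner_pos : forall x, 0 <= Re (hinner x x);
  hinner_def : forall x, hinner x x = C0 -> x = hzero;
  hcomplete : forall u : nat -> hcar,
    (forall eps, 0 < eps -> exists N, forall m n, (N <= m)%nat -> (N <= n)%nat ->
        sqrt (Re (hinner (hadd (u m) (hopp (u n))) (hadd (u m) (hopp (u n))))) < eps) ->
    exists l, forall eps, 0 < eps -> exists N, forall n, (N <= n)%nat ->
        sqrt (Re (hinner (hadd (u n) (hopp l)) (hadd (u n) (hopp l)))) < eps
}.

Arguments hzero {h}. Arguments hadd {h}. Arguments hopp {h}.
Arguments hscal {h}. Arguments hinner {h}.

Definition hnorm {H : Hilbert} (x : H) : R := sqrt (Re (hinner x x)).

Definition is_linear {H K : Hilbert} (f : H -> K) : Prop :=
  (forall x y, f (hadd x y) = hadd (f x) (f y)) /\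
  (forall a x, f (hscal a x) = hscal a (f x)).

Definition is_bounded {H K : Hilbert} (f : H -> K) : Prop :=
  exists M, forall x, hnorm (f x) <= M * hnorm x.

Definition bounded_op {H K : Hilbert} (f : H -> K) : Prop :=
  is_linear f /\ is_bounded f.

(* bounded self-adjoint operator (for an everywhere defined bounded operator,
   self-adjointness is  <A x, y> = <x, A y> ) *)
Definition bounded_selfadjoint {H : Hilbert} (A : H -> H) : Prop :=
  bounded_op A /\ forall x y, hinner (A x) y = hinner x (A y).

Definition is_adjoint {H K : Hilbert} (B : H -> K) (Bs : K -> H) : Prop :=
  forall x y, hinner (B x) y = hinner x (Bs y).

Definition spectrum_gen {X : Type} (add : X -> X -> X) (scal : Cplx -> X -> X)
  (norm : X -> R) (T : X -> X) (lam : Cplx) : Prop :=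
  ~ exists S : X -> X,
      (forall x y, S (add x y) = add (S x) (S y)) /\
      (forall a x, S (scal a x) = scal a (S x)) /\
      (exists M, forall y, norm (S y) <= M * norm y) /\
      (forall x, S (add (T x) (scal (Copp lam) x)) = x) /\
      (forall y, add (T (S y)) (scal (Copp lam) (S y)) = y).

Definition spectrum {H : Hilbert} (T : H -> H) : Cplx -> Prop :=
  spectrum_gen (@hadd H) (@hscal H) (@hnorm H) T.

Definition sadd {H0 H1 : Hilbert} (x y : H0 * H1) : H0 * H1 :=
  (hadd (fst x) (fst y), hadd (snd x) (snd y)).
Definition sscal {H0 H1 : Hilbert} (a : Cplx) (x : H0 * H1) : H0 * H1 :=
  (hscal a (fst x), hscal a (snd x)).
Definition snorm {H0 H1 : Hilbert} (x : H0 * H1) : R :=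
  sqrt (hnorm (fst x) ^ 2 + hnorm (snd x) ^ 2).

Definition spectrum_sum {H0 H1 : Hilbert} (T : H0 * H1 -> H0 * H1) : Cplx -> Prop :=
  spectrum_gen (@sadd H0 H1) (@sscal H0 H1) (@snorm H0 H1) T.

(* V = [[0, B], [-B^*, 0]] *)
Definition Vop {H0 H1 : Hilbert} (B : H1 -> H0) (Bs : H0 -> H1)
  (x : H0 * H1) : H0 * H1 :=
  (B (snd x), hopp (Bs (fst x))).

Definition Lop {H0 H1 : Hilbert} (A0 : H0 -> H0) (A1 : H1 -> H1)
  (B : H1 -> H0) (Bs : H0 -> H1) (x : H0 * H1) : H0 * H1 :=
  (hadd (A0 (fst x)) (B (snd x)), hadd (hopp (Bs (fst x))) (A1 (snd x))).

Definition is_opnorm_sum {H0 H1 : Hilbert} (T : H0 * H1 -> H0 * H1) (n : R) : Prop :=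
  is_lub (fun r => exists x, snorm x <= 1 /\ r = snorm (T x)) n.

Definition is_dist (S T : Cplx -> Prop) (d : R) : Prop :=
  (forall z w, S z -> T w -> d <= Cabs (Csub z w)) /\
  (forall e, (forall z w, S z -> T w -> e <= Cabs (Csub z w)) -> e <= d).

(* Let z = a + i tau with tau <> 0 and x = (x0, x1).
   1. For self-adjoint A, if spec A stays at distance dl from the real point a,
      then ||(A - z) x|| >= ||(A - a) x|| >= dl ||x||
      ([selfadjoint_distance_bound]; it rests on the fact that for a symmetric
      operator S of norm r, I - S^2/r^2 is not bounded below).
   2. Every real a is at distance >= d/2 from spec A0 or from spec A1, so one
      component of (L - z) x controls the corresponding component of x up to
      the coupling ||V||, while the imaginary part of <(L - z) x, x> controls
      | ||x0||^2 - ||x1||^2 |.  Together: L - z is bounded below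
      ([block_bounded_below]).
   3. L is J-self-adjoint with J = diag(I, -I), so the orthogonal complement of
      the range of L - z is J ker(L - conj z) = 0 ([block_range_dense]).
   4. A bounded operator that is bounded below with dense range is onto (least
      squares in a complete space, [surjective_of_bounded_below]), hence has a
      bounded inverse: z is not in the spectrum of L. *)

From Stdlib Require Import Reals Lra Psatz Classical ClassicalEpsilon.
Open Scope R_scope.

Lemma Cext (a b c e : R) : a = c -> b = e -> mkC a b = mkC c e.
Proof. intros; subst; reflexivity. Qed.

Lemma quadratic_discriminant (r p q : R) :
  0 <= q -> (forall t, 0 <= r + 2 * t * p + t * t * q) -> p * p <= r * q.
Proof.
  intros Hq Ht. destruct (Req_dec q 0) as [E|E].
  - subst. destruct (Req_dec p 0) as [Ep|Ep]; [subst; specialize (Ht 0); nra|].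
    specialize (Ht (- (r + 1) / (2 * p))).
    assert (2 * (- (r + 1) / (2 * p)) * p = - (r + 1)) by (field; auto). lra.
  - specialize (Ht (- p / q)).
    assert (Eq : r + 2 * (- p / q) * p + (- p / q) * (- p / q) * q = r - p * p / q)
      by (field; lra).
    rewrite Eq in Ht.
    replace (p * p) with (p * p / q * q) by (field; lra). nra.
Qed.

Lemma approximate_supremum {X : Type} (f : X -> R) (x0 : X) (M : R) :
  (forall x, f x <= M) ->
  exists s, (forall x, f x <= s) /\ forall eta, 0 < eta -> exists x, s - eta < f x.
Proof.
  intro HM.
  destruct (completeness (fun r => exists x, r = f x)) as [s [Hub Hlub]].
  - exists M. intros r [x ->]. apply HM.
  - exists (f x0), x0. reflexivity.
  - exists s. split.
    + intro x. apply Hub. exists x. reflexivity.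
    + intros eta Heta. apply NNPP. intro N.
      assert (s <= s - eta); [|lra].
      apply Hlub. intros r [x ->]. apply Rnot_lt_le. intro L. apply N. exists x. exact L.
Qed.

Lemma inv_succ_small (k : R) :
  0 < k -> exists N : nat, forall n, (N <= n)%nat -> / (INR n + 1) < k.
Proof.
  intro Hk. destruct (archimed_cor1 k Hk) as [N [HN HN0]]. exists N. intros n Hn.
  apply le_INR in Hn. apply lt_INR in HN0. simpl in HN0.
  eapply Rle_lt_trans; [|exact HN]. apply Rinv_le_contravar; lra.
Qed.

Lemma choice_function {I X : Type} (P : I -> X -> Prop) :
  (forall n, exists x, P n x) -> exists u : I -> X, forall n, P n (u n).
Proof.
  intro HP. exists (fun n => proj1_sig (constructive_indefinite_description _ (HP n))).
  intro n. exact (proj2_sig (constructive_indefinite_description _ (HP n))).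
Qed.

Lemma sqrt_add_le (a b : R) : 0 <= a -> 0 <= b -> sqrt (a + b) <= sqrt a + sqrt b.
Proof.
  intros Ha Hb. pose proof (sqrt_pos a). pose proof (sqrt_pos b).
  rewrite <- (sqrt_square (sqrt a + sqrt b)) by lra. apply sqrt_le_1_alt.
  pose proof (sqrt_sqrt a Ha). pose proof (sqrt_sqrt b Hb). nra.
Qed.

Lemma plane_triangle (p q r s : R) :
  sqrt ((p - q) ^ 2 + (r - s) ^ 2) <= sqrt (p ^ 2 + r ^ 2) + sqrt (q ^ 2 + s ^ 2).
Proof.
  assert (Ha : 0 <= p ^ 2 + r ^ 2) by nra. assert (Hb : 0 <= q ^ 2 + s ^ 2) by nra.
  pose proof (sqrt_pos (p ^ 2 + r ^ 2)). pose proof (sqrt_pos (q ^ 2 + s ^ 2)).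
  rewrite <- (sqrt_square (sqrt (p ^ 2 + r ^ 2) + sqrt (q ^ 2 + s ^ 2))) by lra.
  apply sqrt_le_1_alt.
  assert (Cross : - (p * q + r * s) <= sqrt (p ^ 2 + r ^ 2) * sqrt (q ^ 2 + s ^ 2)).
  { rewrite <- sqrt_mult by auto.
    apply Rle_trans with (Rabs (p * q + r * s)); [rewrite <- Rabs_Ropp; apply RRle_abs|].
    rewrite <- sqrt_Rsqr_abs. apply sqrt_le_1_alt. unfold Rsqr.
    pose proof (Rle_0_sqr (p * s - r * q)). unfold Rsqr in *. nra. }
  pose proof (sqrt_sqrt _ Ha). pose proof (sqrt_sqrt _ Hb). nra.
Qed.

Lemma Cabs_triangle (u v w : Cplx) : Cabs (Csub u w) <= Cabs (Csub u v) + Cabs (Csub w v).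
Proof.
  destruct u as [u1 u2], v as [v1 v2], w as [w1 w2]. unfold Cabs, Csub, Cadd, Copp; simpl.
  pose proof (plane_triangle (u1 - v1) (w1 - v1) (u2 - v2) (w2 - v2)) as T.
  replace (u1 - v1 - (w1 - v1)) with (u1 + - w1) in T by ring.
  replace (u2 - v2 - (w2 - v2)) with (u2 + - w2) in T by ring.
  exact T.
Qed.

Lemma Cabs_real_sub (p a : R) : Cabs (Csub (mkC p 0) (mkC a 0)) = Rabs (p - a).
Proof.
  unfold Cabs, Csub, Cadd, Copp; simpl. rewrite <- sqrt_Rsqr_abs. f_equal. unfold Rsqr. ring.
Qed.

Section HilbertAlgebra.
Variable H : Hilbert.
Implicit Types x y z : H.

Lemma hadd_0l x : hadd hzero x = x.
Proof. rewrite hadd_comm; apply hadd_0. Qed.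

Lemma hadd_cancel x y z : hadd x y = hadd x z -> y = z.
Proof.
  intro E.
  assert (E2 : hadd (hopp x) (hadd x y) = hadd (hopp x) (hadd x z)) by (rewrite E; reflexivity).
  rewrite !hadd_assoc, (hadd_comm _ (hopp x) x), hadd_opp, !hadd_0l in E2. exact E2.
Qed.

Lemma hscal_0 x : hscal C0 x = hzero.
Proof.
  apply (hadd_cancel (hscal C0 x)). rewrite hadd_0, <- hscal_adds.
  f_equal. unfold Cadd, C0; simpl. apply Cext; ring.
Qed.

Lemma hopp_scal x : hopp x = hscal (mkC (-1) 0) x.
Proof.
  apply (hadd_cancel x). rewrite hadd_opp.
  rewrite <- (hscal_1 H x) at 1. rewrite <- hscal_adds, <- (hscal_0 x).
  f_equal. unfold Cadd, C1, C0; simpl. apply Cext; ring.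
Qed.

Lemma hopp_hscal a x : hopp (hscal a x) = hscal a (hopp x).
Proof.
  rewrite !hopp_scal, <- !hscal_assoc. f_equal. destruct a. unfold Cmul; apply Cext; simpl; ring.
Qed.

Lemma inner_addr x y z : hinner x (hadd y z) = Cadd (hinner x y) (hinner x z).
Proof.
  rewrite hinner_conj, hinner_add, (hinner_conj _ y x), (hinner_conj _ z x).
  destruct (hinner x y), (hinner x z). unfold Cconj, Cadd; simpl. apply Cext; ring.
Qed.

Lemma inner_scalr a x y : hinner x (hscal a y) = Cmul (Cconj a) (hinner x y).
Proof.
  rewrite hinner_conj, hinner_scal, (hinner_conj _ y x).
  destruct (hinner x y), a. unfold Cconj, Cmul; simpl. apply Cext; ring.
Qed.

Lemma inner_oppl x y : hinner (hopp x) y = Copp (hinner x y).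
Proof.
  rewrite hopp_scal, hinner_scal. destruct (hinner x y). unfold Cmul, Copp; simpl. apply Cext; ring.
Qed.

Lemma inner_oppr x y : hinner x (hopp y) = Copp (hinner x y).
Proof.
  rewrite hopp_scal, inner_scalr. destruct (hinner x y).
  unfold Cconj, Cmul, Copp; simpl. apply Cext; ring.
Qed.

Lemma inner_0l y : hinner hzero y = C0.
Proof.
  rewrite <- (hscal_0 y), hinner_scal. destruct (hinner y y). unfold Cmul, C0; simpl. apply Cext; ring.
Qed.

Lemma inner_0r y : hinner y hzero = C0.
Proof. rewrite hinner_conj, inner_0l. unfold Cconj, C0; simpl. apply Cext; ring. Qed.

Lemma Re_sym x y : Re (hinner y x) = Re (hinner x y).
Proof. rewrite hinner_conj. reflexivity. Qed.

Lemma Im_sym x y : Im (hinner y x) = - Im (hinner x y).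
Proof. rewrite hinner_conj. reflexivity. Qed.

Lemma Im_self x : Im (hinner x x) = 0.
Proof. pose proof (Im_sym x x). lra. Qed.

Lemma nsq_zero x : Re (hinner x x) = 0 -> x = hzero.
Proof.
  intro E. apply hinner_def. pose proof (Im_self x).
  destruct (hinner x x); simpl in *; subst. reflexivity.
Qed.

(* Two vectors coincide as soon as their difference has zero square norm; this
   reduces vector identities to scalar identities between inner products. *)
Lemma eq_by_nsq (u v : H) : Re (hinner (hadd u (hopp v)) (hadd u (hopp v))) = 0 -> u = v.
Proof.
  intro E. apply nsq_zero in E. apply (hadd_cancel (hopp v)).
  rewrite (hadd_comm _ (hopp v) v), hadd_opp, hadd_comm. exact E.
Qed.

End HilbertAlgebra.

Ltac expand :=
  repeat rewrite ?hinner_add, ?inner_addr, ?inner_oppl, ?inner_oppr, ?hinner_scal,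
               ?inner_scalr, ?inner_0l, ?inner_0r.
Ltac expand_in N :=
  repeat rewrite ?hinner_add, ?inner_addr, ?inner_oppl, ?inner_oppr, ?hinner_scal,
               ?inner_scalr, ?inner_0l, ?inner_0r in N.
Ltac csimpl := cbn [Re Im Cadd Cmul Copp Cconj C0 C1 Csub] in *.
Ltac veq := apply eq_by_nsq; expand; csimpl; ring.

Section Norm.
Variable H : Hilbert.
Implicit Types x y : H.

Lemma hnorm_sq x : hnorm x ^ 2 = Re (hinner x x).
Proof. unfold hnorm. rewrite pow2_sqrt; auto using hinner_pos. Qed.

Lemma hnorm_nonneg x : 0 <= hnorm x.
Proof. apply sqrt_pos. Qed.

Lemma norm_le_of_sq x y : Re (hinner x x) <= Re (hinner y y) -> hnorm x <= hnorm y.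
Proof. intro. apply sqrt_le_1_alt. auto. Qed.

Lemma norm_le_sq x (c : R) : 0 <= c -> Re (hinner x x) <= c * c -> hnorm x <= c.
Proof. intros. unfold hnorm. rewrite <- (sqrt_square c) by auto. apply sqrt_le_1_alt. auto. Qed.

Lemma sq_of_norm_le x y (c : R) :
  0 <= c -> hnorm x <= c * hnorm y -> Re (hinner x x) <= c * c * Re (hinner y y).
Proof.
  intros Hc Hl. rewrite <- !hnorm_sq.
  pose proof (hnorm_nonneg x). pose proof (hnorm_nonneg y).
  assert (0 <= c * hnorm y) by (apply Rmult_le_pos; auto).
  assert (hnorm x * hnorm x <= (c * hnorm y) * (c * hnorm y)) by (apply Rmult_le_compat; auto).
  simpl. nra.
Qed.

Lemma norm_zero : hnorm (@hzero H) = 0.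
Proof. unfold hnorm. rewrite inner_0l. apply sqrt_0. Qed.

Lemma norm_zero_inv x : hnorm x = 0 -> x = hzero.
Proof. intro E. apply nsq_zero. rewrite <- hnorm_sq, E. ring. Qed.

Lemma norm_opp x : hnorm (hopp x) = hnorm x.
Proof. unfold hnorm. f_equal. expand; csimpl. ring. Qed.

Lemma nsq_scal (a : Cplx) x :
  Re (hinner (hscal a x) (hscal a x)) = (Re a * Re a + Im a * Im a) * Re (hinner x x).
Proof. expand; csimpl. rewrite (Im_self H x). ring. Qed.

Lemma norm_scal (a : Cplx) x : hnorm (hscal a x) = sqrt (Re a * Re a + Im a * Im a) * hnorm x.
Proof. unfold hnorm. rewrite nsq_scal, sqrt_mult; auto using hinner_pos. nra. Qed.

Lemma norm_scal_real (t : R) x : hnorm (hscal (mkC t 0) x) = Rabs t * hnorm x.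
Proof.
  rewrite norm_scal. simpl. rewrite Rmult_0_l, Rplus_0_r. fold (Rsqr t).
  rewrite sqrt_Rsqr_abs. reflexivity.
Qed.

Lemma cauchy_schwarz x y : Rabs (Re (hinner x y)) <= hnorm x * hnorm y.
Proof.
  assert (D : Re (hinner x y) * Re (hinner x y) <= Re (hinner x x) * Re (hinner y y)).
  { apply quadratic_discriminant; [apply hinner_pos|]. intro t.
    pose proof (hinner_pos H (hadd x (hscal (mkC t 0) y))) as N.
    expand_in N; csimpl. rewrite (Re_sym H x y) in N. nra. }
  unfold hnorm. rewrite <- sqrt_mult by apply hinner_pos.
  rewrite <- sqrt_Rsqr_abs. apply sqrt_le_1_alt. exact D.
Qed.

Lemma norm_triangle x y : hnorm (hadd x y) <= hnorm x + hnorm y.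
Proof.
  apply norm_le_sq; [pose proof (hnorm_nonneg x); pose proof (hnorm_nonneg y); lra|].
  expand; csimpl. rewrite (Re_sym H x y).
  pose proof (cauchy_schwarz x y). pose proof (RRle_abs (Re (hinner x y))).
  pose proof (hnorm_sq x); pose proof (hnorm_sq y). simpl in *. nra.
Qed.

End Norm.

(** * Bounded operators, resolvents and the spectrum *)

Definition shift {H : Hilbert} (T : H -> H) (lam : Cplx) (x : H) : H :=
  hadd (T x) (hscal (Copp lam) x).

Definition bounded_below {H K : Hilbert} (f : H -> K) : Prop :=
  exists c, 0 < c /\ forall x, c * hnorm x <= hnorm (f x).

Lemma lin_zero {H K : Hilbert} (f : H -> K) : is_linear f -> f hzero = hzero.
Proof. intros [_ Hs]. rewrite <- (hscal_0 H hzero), Hs, hscal_0. reflexivity. Qed.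

Lemma lin_opp {H K : Hilbert} (f : H -> K) (x : H) : is_linear f -> f (hopp x) = hopp (f x).
Proof. intros [_ Hs]. rewrite !hopp_scal, Hs. reflexivity. Qed.

Lemma lin_sub {H K : Hilbert} (f : H -> K) (a b : H) :
  is_linear f -> f (hadd a (hopp b)) = hadd (f a) (hopp (f b)).
Proof. intro L. pose proof L as [La _]. rewrite La, lin_opp; auto. Qed.

Lemma bound_nonneg {H K : Hilbert} (f : H -> K) :
  is_bounded f -> exists M, 0 <= M /\ forall x, hnorm (f x) <= M * hnorm x.
Proof.
  intros [M HM]. exists (Rabs M). split; [apply Rabs_pos|]. intro x.
  eapply Rle_trans; [apply HM|]. apply Rmult_le_compat_r; [apply hnorm_nonneg | apply RRle_abs].
Qed.

Lemma normalize_norm {H : Hilbert} (y : H) :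
  0 < hnorm y -> hnorm (hscal (mkC (/ hnorm y) 0) y) = 1.
Proof.
  intro P. rewrite norm_scal_real, Rabs_right; [field; lra|].
  left. apply Rinv_0_lt_compat. exact P.
Qed.

Lemma operator_norm_exists {H K : Hilbert} (S : H -> K) :
  is_linear S -> is_bounded S ->
  exists r, 0 <= r /\ (forall y, hnorm (S y) <= r * hnorm y) /\
    forall eta, 0 < eta -> exists y, hnorm y <= 1 /\ r - eta < hnorm (S y).
Proof.
  intros Slin Sb. destruct (bound_nonneg S Sb) as [M [HM0 HM]].
  assert (z1 : hnorm (@hzero H) <= 1) by (rewrite norm_zero; lra).
  destruct (approximate_supremum (fun y : {y : H | hnorm y <= 1} => hnorm (S (proj1_sig y)))
              (exist _ hzero z1) M) as [r [Hub Happrox]].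
  { intros [y Hy]. simpl. eapply Rle_trans; [apply HM|]. pose proof (hnorm_nonneg _ y). nra. }
  assert (r0 : 0 <= r).
  { eapply Rle_trans; [apply hnorm_nonneg | apply (Hub (exist _ hzero z1))]. }
  exists r. split; [exact r0|]. split.
  - intro y. destruct (Req_dec (hnorm y) 0) as [E|E].
    + apply norm_zero_inv in E. subst. rewrite lin_zero, !norm_zero by auto. lra.
    + assert (P : 0 < hnorm y) by (pose proof (hnorm_nonneg _ y); lra).
      assert (Hu : hnorm (hscal (mkC (/ hnorm y) 0) y) <= 1) by (rewrite normalize_norm; lra).
      pose proof (Hub (exist (fun v => hnorm v <= 1) _ Hu)) as U. simpl in U.
      destruct Slin as [_ Ss]. rewrite Ss, norm_scal_real, Rabs_right in U.
      2: left; apply Rinv_0_lt_compat; auto.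
      apply (Rmult_le_compat_l (hnorm y)) in U; [|lra].
      rewrite <- Rmult_assoc, Rinv_r, Rmult_1_l in U; lra.
  - intros eta Heta. destruct (Happrox eta Heta) as [[y Hy] Hlt]. exists y. auto.
Qed.

Lemma resolvent_exists {H : Hilbert} (T : H -> H) (lam : Cplx) :
  ~ spectrum T lam ->
  exists S : H -> H, is_linear S /\ is_bounded S /\
    (forall x, S (shift T lam x) = x) /\ (forall y, shift T lam (S y) = y).
Proof.
  intro N. unfold spectrum, spectrum_gen in N. apply NNPP in N.
  destruct N as [S [Sa [Ss [Sb [ST TS]]]]]. exists S. repeat split; auto.
Qed.

Lemma bounded_below_of_le {H K : Hilbert} (f : H -> K) (M : R) :
  0 <= M -> (forall x, hnorm x <= M * hnorm (f x)) -> bounded_below f.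
Proof.
  intros HM0 HM. exists (/ (M + 1)). split; [apply Rinv_0_lt_compat; lra|]. intro x.
  apply (Rmult_le_reg_l (M + 1)); [lra|].
  rewrite <- Rmult_assoc, Rinv_r, Rmult_1_l by lra.
  pose proof (HM x). pose proof (hnorm_nonneg _ (f x)). nra.
Qed.

Lemma resolvent_bounded_below {H : Hilbert} (T : H -> H) (lam : Cplx) :
  ~ spectrum T lam -> bounded_below (shift T lam).
Proof.
  intro N. destruct (resolvent_exists T lam N) as [S [_ [Sb [ST _]]]].
  destruct (bound_nonneg S Sb) as [M [HM0 HM]].
  apply (bounded_below_of_le _ M HM0). intro w. rewrite <- (ST w) at 1. apply HM.
Qed.

Lemma bounded_below_injective {H K : Hilbert} (f : H -> K) (u v : H) :
  is_linear f -> bounded_below f -> f u = f v -> u = v.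
Proof.
  intros Flin [c [c0 Hc]] E. pose proof (Hc (hadd u (hopp v))) as L.
  rewrite lin_sub, E, hadd_opp, norm_zero in L by auto.
  pose proof (hnorm_nonneg _ (hadd u (hopp v))).
  assert (N : hnorm (hadd u (hopp v)) = 0) by nra.
  apply norm_zero_inv in N. apply eq_by_nsq. rewrite N, inner_0l. reflexivity.
Qed.

Lemma not_spectrum_of_bijective {H : Hilbert} (T : H -> H) (lam : Cplx) :
  is_linear (shift T lam) -> bounded_below (shift T lam) ->
  (forall y, exists x, shift T lam x = y) -> ~ spectrum T lam.
Proof.
  intros Tlin Tlow Tsurj Sp. apply Sp.
  destruct (choice_function (fun (y : H) x => shift T lam x = y) Tsurj) as [S TS].
  pose proof (fun u v => bounded_below_injective _ u v Tlin Tlow) as Inj.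
  destruct Tlin as [La Ls]. destruct Tlow as [c [c0 Hc]].
  exists S. split; [|split; [|split; [|split]]].
  - intros x y. apply Inj. rewrite La, !TS. reflexivity.
  - intros a x. apply Inj. rewrite Ls, !TS. reflexivity.
  - exists (/ c). intro y. pose proof (Hc (S y)) as L. rewrite TS in L.
    apply (Rmult_le_reg_l c); auto. rewrite <- Rmult_assoc, Rinv_r, Rmult_1_l; lra.
  - intro x. apply Inj. exact (TS _).
  - exact TS.
Qed.

Lemma shift_bounded {H : Hilbert} (T : H -> H) (lam : Cplx) :
  is_bounded T -> is_bounded (shift T lam).
Proof.
  intro Tb. destruct (bound_nonneg T Tb) as [M [HM0 HM]].
  exists (M + sqrt (Re (Copp lam) * Re (Copp lam) + Im (Copp lam) * Im (Copp lam))).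
  intro x. eapply Rle_trans; [apply norm_triangle|]. rewrite norm_scal.
  pose proof (HM x). lra.
Qed.

Lemma bounded_below_comp {H K L : Hilbert} (f : K -> L) (g : H -> K) :
  bounded_below f -> bounded_below g -> bounded_below (fun x => f (g x)).
Proof.
  intros [c [c0 Hc]] [e [e0 He]]. exists (c * e). split; [nra|]. intro x.
  pose proof (He x). pose proof (Hc (g x)). pose proof (hnorm_nonneg _ x). nra.
Qed.

(** * Self-adjoint operators: distance to the spectrum *)

Definition symmetric {H : Hilbert} (A : H -> H) : Prop :=
  forall x y, hinner (A x) y = hinner x (A y).

Lemma Im_symmetric {H : Hilbert} (A : H -> H) (x : H) :
  symmetric A -> Im (hinner (A x) x) = 0.
Proof. intro S. pose proof (Im_sym H (A x) x) as E. rewrite <- S in E. lra. Qed.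

Lemma resolvent_symmetric {H : Hilbert} (A S : H -> H) (a : R) :
  symmetric A -> (forall y, shift A (mkC a 0) (S y) = y) -> symmetric S.
Proof.
  intros Asa TS y w. rewrite <- (TS w) at 1. rewrite <- (TS y) at 2. unfold shift.
  expand. rewrite (Asa (S y) (S w)).
  destruct (hinner (S y) (A (S w))), (hinner (S y) (S w)).
  unfold Copp, Cconj, Cmul, Cadd; simpl. apply Cext; ring.
Qed.

(* Let S = (A - a)^{-1}.  If a + s lies outside the spectrum of A as well,
   then I - s S is bounded below, since (A - a - s) S = I - s S. *)
Lemma shifted_resolvent_bounded_below {H : Hilbert} (A S : H -> H) (a s : R) :
  is_bounded A -> (forall y, shift A (mkC a 0) (S y) = y) ->
  ~ spectrum A (mkC (a + s) 0) ->
  bounded_below (fun y => hadd y (hscal (mkC (- s) 0) (S y))).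
Proof.
  intros Ab TS Ns.
  destruct (bound_nonneg _ (shift_bounded A (mkC a 0) Ab)) as [M [HM0 HM]].
  destruct (resolvent_bounded_below A _ Ns) as [c [c0 Hc]].
  apply (bounded_below_of_le _ (M / c)); [unfold Rdiv; apply Rmult_le_pos; [lra | left; apply Rinv_0_lt_compat; lra]|]. intro y.
  assert (E : shift A (mkC (a + s) 0) (S y) = hadd y (hscal (mkC (- s) 0) (S y))).
  { rewrite <- (TS y) at 2. unfold shift. veq. }
  pose proof (Hc (S y)) as L. rewrite E in L.
  pose proof (HM (S y)) as U. rewrite TS in U.
  apply (Rmult_le_reg_l c); [lra|]. unfold Rdiv.
  replace (c * (M * / c * hnorm (hadd y (hscal (mkC (- s) 0) (S y)))))
    with (M * hnorm (hadd y (hscal (mkC (- s) 0) (S y)))) by (field; lra).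
  pose proof (hnorm_nonneg _ (S y)). nra.
Qed.

Section SymmetricNorm.
Variables (H : Hilbert) (S : H -> H) (r : R).
Hypotheses (Ssym : symmetric S) (r_pos : 0 < r)
  (r_bound : forall y, hnorm (S y) <= r * hnorm y)
  (r_approx : forall eta, 0 < eta -> exists y, hnorm y <= 1 /\ r - eta < hnorm (S y)).

Definition defect (y : H) : H := hadd y (hscal (mkC (- (/ r * / r)) 0) (S (S y))).

(* ||(I - S^2/r^2) y||^2 <= ||y||^2 - ||S y||^2/r^2, using <S^2 y, y> = ||S y||^2
   and ||S^2 y|| <= r ||S y||. *)
Lemma defect_square_norm (y : H) :
  Re (hinner (defect y) (defect y)) <= Re (hinner y y) - / r * / r * Re (hinner (S y) (S y)).
Proof.
  unfold defect. expand; csimpl. rewrite (Re_sym H y (S (S y))).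
  assert (E1 : Re (hinner (S y) (S y)) = Re (hinner y (S (S y)))) by (rewrite Ssym; reflexivity).
  pose proof (sq_of_norm_le H (S (S y)) (S y) r (Rlt_le _ _ r_pos) (r_bound (S y))) as B2.
  assert (ir : 0 < / r) by (apply Rinv_0_lt_compat; auto).
  assert (B3 : / r * / r * / r * / r * Re (hinner (S (S y)) (S (S y)))
               <= / r * / r * Re (hinner (S y) (S y))).
  { apply Rle_trans with (/ r * / r * / r * / r * (r * r * Re (hinner (S y) (S y)))).
    - apply Rmult_le_compat_l; [nra | exact B2].
    - right. field. lra. }
  rewrite E1 in *. ring_simplify. nra.
Qed.

(* Since r is approached by ||S y|| on the unit ball, the defect operator is
   not bounded below. *)
Lemma defect_not_bounded_below : ~ bounded_below defect.
Proof.
  intros [c [c0 Hc]]. set (K := / c).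
  assert (K0 : 0 <= K) by (left; apply Rinv_0_lt_compat; auto).
  assert (Hk : forall y, hnorm y <= K * hnorm (defect y)).
  { intro y. apply (Rmult_le_reg_l c); auto. unfold K. rewrite <- Rmult_assoc, Rinv_r, Rmult_1_l; auto; lra. }
  set (th := / (2 * (1 + K * K))).
  assert (th0 : 0 < th) by (unfold th; apply Rinv_0_lt_compat; nra).
  assert (th1 : th * (2 * (1 + K * K)) = 1) by (unfold th; field; nra).
  destruct (r_approx (r * th)) as [y [Hy1 Hy2]]; [nra|].
  pose proof (r_bound y) as Ry.
  pose proof (hnorm_sq H y) as Ny. pose proof (hnorm_sq H (S y)) as NSy.
  simpl in Ny, NSy. rewrite Rmult_1_r in Ny, NSy.
  pose proof (hnorm_nonneg _ y). pose proof (hnorm_nonneg _ (S y)).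
  assert (thl : th <= 1 / 2) by nra.
  set (q := 1 - th) in *.
  assert (q0 : 0 < r * q) by (unfold q; nra).
  assert (A1 : r * q < hnorm (S y)) by (unfold q; lra).
  assert (A2 : r * q * (r * q) < Re (hinner (S y) (S y))) by nra.
  assert (A3 : q * q < Re (hinner y y)).
  { assert (hnorm (S y) * hnorm (S y) <= r * hnorm y * (r * hnorm y)) by nra. unfold q in *; nra. }
  assert (A5 : q * q < / r * / r * Re (hinner (S y) (S y))).
  { apply Rmult_lt_compat_l with (r := / r * / r) in A2.
    - replace (/ r * / r * (r * q * (r * q))) with (q * q) in A2 by (field; lra). exact A2.
    - assert (0 < / r) by (apply Rinv_0_lt_compat; auto); nra. }
  pose proof (sq_of_norm_le H y (defect y) K K0 (Hk y)) as A6.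
  pose proof (defect_square_norm y) as A7.
  assert (A4 : Re (hinner y y) <= 1) by nra.
  assert (A8 : Re (hinner (defect y) (defect y)) < 1 - q * q) by lra.
  assert (A9 : q * q < K * K * (1 - q * q)) by nra.
  unfold q in A9. nra.
Qed.

End SymmetricNorm.

(* With
   S = (A - a)^{-1} of norm r, ||x|| <= r ||(A - a) x||, and dl r <= 1: otherwise
   a +- 1/r would be resolvent points, making I - S^2/r^2 = (I + S/r)(I - S/r)
   bounded below, which [defect_not_bounded_below] forbids. *)
Lemma selfadjoint_distance_bound {H : Hilbert} (A : H -> H) (a dl : R) :
  bounded_selfadjoint A -> 0 < dl ->
  (forall mu, spectrum A mu -> dl <= Cabs (Csub mu (mkC a 0))) ->
  forall x, dl * hnorm x <= hnorm (shift A (mkC a 0) x).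
Proof.
  intros [[_ Ab] Asa] Hdl hsp.
  assert (Outside : forall s, Rabs s < dl -> ~ spectrum A (mkC (a + s) 0)).
  { intros s Hs Sp. apply hsp in Sp. rewrite Cabs_real_sub in Sp.
    replace (a + s - a) with s in Sp by ring. lra. }
  assert (Na : ~ spectrum A (mkC a 0)).
  { replace a with (a + 0) at 1 by ring. apply Outside. rewrite Rabs_R0. exact Hdl. }
  destruct (resolvent_exists A _ Na) as [S [Slin [Sb [ST TS]]]].
  pose proof (resolvent_symmetric A S a Asa TS) as Ssym.
  destruct (operator_norm_exists S Slin Sb) as [r [r0 [r_bound r_approx]]].
  assert (Resolvent_norm : dl * r <= 1).
  { apply Rnot_lt_le. intro Big.
    assert (rpos : 0 < r) by (destruct (Req_dec r 0) as [E|E]; [rewrite E in Big; lra | lra]).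
    assert (ir : 0 < / r) by (apply Rinv_0_lt_compat; auto).
    assert (Small : / r < dl).
    { apply (Rmult_lt_reg_l r); auto. rewrite Rinv_r by lra. lra. }
    apply (defect_not_bounded_below H S r Ssym rpos r_bound r_approx).
    assert (Factorization : forall y, hadd (hadd y (hscal (mkC (- / r) 0) (S y)))
                     (hscal (mkC (- - / r) 0) (S (hadd y (hscal (mkC (- / r) 0) (S y)))))
                   = defect H S r y).
    { intro y. destruct Slin as [Sa Ss]. unfold defect. rewrite Sa, Ss. veq. }
    assert (Factored : bounded_below (fun y =>
              hadd (hadd y (hscal (mkC (- / r) 0) (S y)))
                (hscal (mkC (- - / r) 0) (S (hadd y (hscal (mkC (- / r) 0) (S y))))))).
    { apply (bounded_below_comp (fun y => hadd y (hscal (mkC (- - / r) 0) (S y)))).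
      - apply (shifted_resolvent_bounded_below A S a (- / r) Ab TS).
        apply Outside. rewrite Rabs_Ropp, Rabs_right; lra.
      - apply (shifted_resolvent_bounded_below A S a (/ r) Ab TS).
        apply Outside. rewrite Rabs_right; lra. }
    destruct Factored as [c [c0 Hc]]. exists c. split; [exact c0|].
    intro y. rewrite <- Factorization. apply Hc. }
  intro x. pose proof (r_bound (shift A (mkC a 0) x)) as U. rewrite ST in U.
  pose proof (hnorm_nonneg _ (shift A (mkC a 0) x)).
  apply Rle_trans with (dl * (r * hnorm (shift A (mkC a 0) x))); [apply Rmult_le_compat_l; lra | nra].
Qed.

(** * Surjectivity of operators bounded below with dense range *)

(* Least squares: for T bounded below, the misfit ||y - T x||^2 attains its
   infimum (parallelogram law + completeness), and at a minimiser the residual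
   y - T l is orthogonal to the range of T. *)
Section LeastSquares.
Variables (H : Hilbert) (T : H -> H) (y : H).
Hypothesis Tlin : is_linear T.

Definition residual (x : H) : H := hadd y (hopp (T x)).
Definition misfit (x : H) : R := Re (hinner (residual x) (residual x)).

Lemma misfit_nonneg (x : H) : 0 <= misfit x.
Proof. apply hinner_pos. Qed.

(* Parallelogram law applied to the residuals at u, v and at their midpoint. *)
Lemma misfit_parallelogram (g : R) (u v : H) :
  (forall x, g <= misfit x) ->
  Re (hinner (T (hadd u (hopp v))) (T (hadd u (hopp v)))) <= 2 * misfit u + 2 * misfit v - 4 * g.
Proof.
  intro Hg. pose proof (Hg (hscal (mkC (/ 2) 0) (hadd u v))) as G.
  destruct Tlin as [Ta Ts]. rewrite lin_sub by (split; auto).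
  unfold misfit, residual in *. rewrite Ts, Ta in G. expand_in G. csimpl. expand. csimpl.
  ring_simplify. ring_simplify in G. lra.
Qed.

Lemma minimizing_sequence_cauchy (c g : R) (xs : nat -> H) :
  0 < c -> (forall x, c * hnorm x <= hnorm (T x)) -> (forall x, g <= misfit x) ->
  (forall n, misfit (xs n) < g + / (INR n + 1)) ->
  forall eps, 0 < eps -> exists N, forall n k, (N <= n)%nat -> (N <= k)%nat ->
    hnorm (hadd (xs n) (hopp (xs k))) < eps.
Proof.
  intros c0 Hlow Hg Hxs eps He.
  destruct (inv_succ_small (c * c * (eps * eps) / 8)) as [N HN].
  { apply Rmult_lt_0_compat; [|lra]. apply Rmult_lt_0_compat; nra. }
  exists N. intros n k Hn Hk. pose proof (HN n Hn). pose proof (HN k Hk).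
  set (w := hadd (xs n) (hopp (xs k))).
  pose proof (misfit_parallelogram g (xs n) (xs k) Hg) as P. fold w in P.
  pose proof (Hxs n). pose proof (Hxs k).
  assert (L : c * c * Re (hinner w w) <= Re (hinner (T w) (T w))).
  { rewrite <- !hnorm_sq. pose proof (Hlow w). pose proof (hnorm_nonneg _ w).
    assert (0 <= c * hnorm w) by nra.
    assert (c * hnorm w * (c * hnorm w) <= hnorm (T w) * hnorm (T w)) by (apply Rmult_le_compat; lra).
    simpl. lra. }
  assert (Q : Re (hinner w w) < eps * eps).
  { apply (Rmult_lt_reg_l (c * c)); [nra|].
    assert (0 < c * c * (eps * eps)) by (apply Rmult_lt_0_compat; nra). lra. }
  unfold hnorm. rewrite <- (sqrt_square eps) by lra.
  apply sqrt_lt_1_alt. split; [apply hinner_pos | exact Q].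
Qed.

Lemma residual_lipschitz (M : R) (u v : H) :
  (forall x, hnorm (T x) <= M * hnorm x) ->
  hnorm (residual v) <= hnorm (residual u) + M * hnorm (hadd u (hopp v)).
Proof.
  intro HM. eapply Rle_trans; [|apply Rplus_le_compat_l, HM].
  rewrite lin_sub by auto. eapply Rle_trans; [|apply norm_triangle].
  right. f_equal. unfold residual. veq.
Qed.

Lemma misfit_at_limit (M g : R) (xs : nat -> H) (l : H) :
  0 <= M -> (forall x, hnorm (T x) <= M * hnorm x) -> 0 <= g ->
  (forall n, misfit (xs n) < g + / (INR n + 1)) ->
  (forall eps, 0 < eps -> exists N, forall n, (N <= n)%nat ->
     hnorm (hadd (xs n) (hopp l)) < eps) ->
  misfit l <= g.
Proof.
  intros HM0 HM g0 Hxs Hl. apply Rnot_lt_le. intro Big.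
  set (rho := hnorm (residual l) - sqrt g).
  assert (rho0 : 0 < rho).
  { assert (sqrt g < sqrt (misfit l)) by (apply sqrt_lt_1_alt; lra).
    unfold rho, hnorm. fold (misfit l). lra. }
  destruct (inv_succ_small (rho * rho / 4)) as [N1 HN1]; [nra|].
  destruct (Hl (rho / (2 * (M + 1)))) as [N2 HN2]; [apply Rdiv_lt_0_compat; lra|].
  set (n := max N1 N2).
  specialize (HN1 n (Nat.le_max_l _ _)). specialize (HN2 n (Nat.le_max_r _ _)).
  assert (S1 : hnorm (residual (xs n)) < sqrt g + rho / 2).
  { apply Rle_lt_trans with (sqrt (g + / (INR n + 1))).
    - apply sqrt_le_1_alt. pose proof (Hxs n). unfold misfit in *. lra.
    - assert (0 < / (INR n + 1)) by (apply Rinv_0_lt_compat; pose proof (pos_INR n); lra).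
      eapply Rle_lt_trans; [apply sqrt_add_le; lra|]. apply Rplus_lt_compat_l.
      rewrite <- (sqrt_square (rho / 2)) by lra. apply sqrt_lt_1_alt. lra. }
  assert (S2 : M * hnorm (hadd (xs n) (hopp l)) < rho / 2).
  { pose proof (hnorm_nonneg _ (hadd (xs n) (hopp l))).
    apply Rle_lt_trans with ((M + 1) * hnorm (hadd (xs n) (hopp l))); [nra|].
    replace (rho / 2) with ((M + 1) * (rho / (2 * (M + 1)))) by (field; lra).
    apply Rmult_lt_compat_l; lra. }
  pose proof (residual_lipschitz M (xs n) l HM). unfold rho in *. lra.
Qed.

Lemma least_squares_minimizer (c M : R) :
  0 < c -> (forall x, c * hnorm x <= hnorm (T x)) -> 0 <= M ->
  (forall x, hnorm (T x) <= M * hnorm x) ->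
  exists l, forall x, misfit l <= misfit x.
Proof.
  intros c0 Hlow HM0 HM.
  destruct (approximate_supremum (fun x => - misfit x) hzero 0) as [m [Hub Happrox]].
  { intro x. pose proof (misfit_nonneg x). lra. }
  set (g := - m).
  assert (Hg : forall x, g <= misfit x) by (intro x; pose proof (Hub x); unfold g; lra).
  assert (g0 : 0 <= g).
  { apply Rnot_lt_le. intro Neg. destruct (Happrox m) as [z Hz]; [unfold g in Neg; lra|].
    pose proof (misfit_nonneg z). lra. }
  assert (Ex : forall n : nat, exists x, misfit x < g + / (INR n + 1)).
  { intro n. destruct (Happrox (/ (INR n + 1))) as [x Hx].
    - apply Rinv_0_lt_compat. pose proof (pos_INR n). lra.
    - exists x. unfold g. lra. }
  destruct (choice_function _ Ex) as [xs Hxs].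
  destruct (hcomplete H xs (minimizing_sequence_cauchy c g xs c0 Hlow Hg Hxs)) as [l Hl].
  exists l. intro x. apply Rle_trans with g; [|apply Hg].
  exact (misfit_at_limit M g xs l HM0 HM g0 Hxs Hl).
Qed.

Lemma minimizer_residual_orthogonal (l : H) :
  (forall x, misfit l <= misfit x) -> forall x, Re (hinner (T x) (residual l)) = 0.
Proof.
  intros Hmin x. destruct Tlin as [Ta Ts].
  set (p := Re (hinner (T x) (residual l))). set (q := Re (hinner (T x) (T x))).
  assert (Q : forall t, 0 <= 0 + 2 * t * (- p) + t * t * q).
  { intro t. pose proof (Hmin (hadd l (hscal (mkC t 0) x))) as G.
    unfold p, q, misfit, residual in *. rewrite Ta, Ts in G. expand_in G. expand. csimpl.
    rewrite ?(Re_sym H y (T l)), ?(Re_sym H y (T x)), ?(Re_sym H (T l) (T x)) in *.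
    ring_simplify. ring_simplify in G. lra. }
  apply quadratic_discriminant in Q; [nra | apply hinner_pos].
Qed.

End LeastSquares.

(* A bounded linear operator that is bounded below and whose range has trivial
   orthogonal complement is onto: the least-squares residual must vanish. *)
Lemma surjective_of_bounded_below {H : Hilbert} (T : H -> H) :
  is_linear T -> is_bounded T -> bounded_below T ->
  (forall e, (forall x, Re (hinner (T x) e) = 0) -> e = hzero) ->
  forall y, exists x, T x = y.
Proof.
  intros Tlin Tb [c [c0 Hlow]] Horth y.
  destruct (bound_nonneg T Tb) as [M [HM0 HM]].
  destruct (least_squares_minimizer H T y Tlin c M c0 Hlow HM0 HM) as [l Hl].
  exists l. symmetry. apply eq_by_nsq. change (misfit H T y l = 0). unfold misfit.
  rewrite (Horth _ (minimizer_residual_orthogonal H T y Tlin l Hl)), inner_0l. reflexivity.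
Qed.

(** * The orthogonal direct sum H0 (+) H1 as a Hilbert space *)

Definition sopp {H0 H1 : Hilbert} (x : H0 * H1) : H0 * H1 := (hopp (fst x), hopp (snd x)).
Definition sinner {H0 H1 : Hilbert} (x y : H0 * H1) : Cplx :=
  Cadd (hinner (fst x) (fst y)) (hinner (snd x) (snd y)).

Section DirectSum.
Variables H0 H1 : Hilbert.
Implicit Types x y : H0 * H1.

Lemma sinner_norm x : sqrt (Re (sinner x x)) = snorm x.
Proof. unfold snorm, sinner. cbn [Re Cadd]. rewrite !hnorm_sq. reflexivity. Qed.

Lemma snorm_nonneg x : 0 <= snorm x.
Proof. apply sqrt_pos. Qed.

Lemma snorm_fst x : hnorm (fst x) <= snorm x.
Proof.
  unfold snorm. rewrite <- (sqrt_pow2 (hnorm (fst x))) at 1 by apply hnorm_nonneg.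
  apply sqrt_le_1_alt. pose proof (pow2_ge_0 (hnorm (snd x))). lra.
Qed.

Lemma snorm_snd x : hnorm (snd x) <= snorm x.
Proof.
  unfold snorm. rewrite <- (sqrt_pow2 (hnorm (snd x))) at 1 by apply hnorm_nonneg.
  apply sqrt_le_1_alt. pose proof (pow2_ge_0 (hnorm (fst x))). lra.
Qed.

Lemma snorm_le_sum x : snorm x <= hnorm (fst x) + hnorm (snd x).
Proof.
  unfold snorm. pose proof (hnorm_nonneg _ (fst x)). pose proof (hnorm_nonneg _ (snd x)).
  rewrite <- (sqrt_square (hnorm (fst x) + hnorm (snd x))) by lra. apply sqrt_le_1_alt. nra.
Qed.

Lemma snorm_inl (v : H0) : snorm ((v, hzero) : H0 * H1) = hnorm v.
Proof.
  unfold snorm; cbn [fst snd]. rewrite norm_zero.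
  replace (hnorm v ^ 2 + 0 ^ 2) with (hnorm v ^ 2) by ring. apply sqrt_pow2, hnorm_nonneg.
Qed.

Lemma snorm_inr (v : H1) : snorm ((hzero, v) : H0 * H1) = hnorm v.
Proof.
  unfold snorm; cbn [fst snd]. rewrite norm_zero.
  replace (0 ^ 2 + hnorm v ^ 2) with (hnorm v ^ 2) by ring. apply sqrt_pow2, hnorm_nonneg.
Qed.

Lemma snorm_scal_real (t : R) x : snorm (sscal (mkC t 0) x) = Rabs t * snorm x.
Proof.
  unfold snorm, sscal. cbn [fst snd]. rewrite !norm_scal_real.
  replace ((Rabs t * hnorm (fst x)) ^ 2 + (Rabs t * hnorm (snd x)) ^ 2)
    with (Rabs t ^ 2 * (hnorm (fst x) ^ 2 + hnorm (snd x) ^ 2)) by ring.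
  rewrite sqrt_mult, sqrt_pow2; [reflexivity | apply Rabs_pos | apply pow2_ge_0 |].
  pose proof (pow2_ge_0 (hnorm (fst x))). pose proof (pow2_ge_0 (hnorm (snd x))). lra.
Qed.

Lemma snorm_zero_inv x : snorm x = 0 -> x = (hzero, hzero).
Proof.
  intro E. pose proof (snorm_fst x). pose proof (snorm_snd x).
  pose proof (hnorm_nonneg _ (fst x)). pose proof (hnorm_nonneg _ (snd x)).
  destruct x as [x0 x1]. cbn [fst snd] in *. f_equal; apply norm_zero_inv; lra.
Qed.

(* Completeness of the sum: a Cauchy sequence has Cauchy components. *)
Lemma sum_complete (u : nat -> H0 * H1) :
  (forall eps, 0 < eps -> exists N, forall m n, (N <= m)%nat -> (N <= n)%nat ->
      snorm (sadd (u m) (sopp (u n))) < eps) ->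
  exists l, forall eps, 0 < eps -> exists N, forall n, (N <= n)%nat ->
      snorm (sadd (u n) (sopp l)) < eps.
Proof.
  intro Hu.
  destruct (hcomplete H0 (fun n => fst (u n))) as [l0 L0].
  { intros eps He. destruct (Hu eps He) as [N HN]. exists N. intros m n Hm Hn.
    eapply Rle_lt_trans; [apply (snorm_fst (sadd (u m) (sopp (u n)))) | exact (HN m n Hm Hn)]. }
  destruct (hcomplete H1 (fun n => snd (u n))) as [l1 L1].
  { intros eps He. destruct (Hu eps He) as [N HN]. exists N. intros m n Hm Hn.
    eapply Rle_lt_trans; [apply (snorm_snd (sadd (u m) (sopp (u n)))) | exact (HN m n Hm Hn)]. }
  exists (l0, l1). intros eps He.
  destruct (L0 (eps / 2)) as [N0 HN0]; [lra|]. destruct (L1 (eps / 2)) as [N1 HN1]; [lra|].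
  exists (max N0 N1). intros n Hn.
  specialize (HN0 n (Nat.le_trans _ _ _ (Nat.le_max_l _ _) Hn)).
  specialize (HN1 n (Nat.le_trans _ _ _ (Nat.le_max_r _ _) Hn)).
  eapply Rle_lt_trans; [apply snorm_le_sum|]. cbn [fst snd sadd sopp]. unfold hnorm. lra.
Qed.

End DirectSum.

Ltac destruct_pairs := repeat match goal with p : (_ * _)%type |- _ => destruct p end.
Ltac generalize_inner := repeat match goal with |- context [@hinner ?K ?a ?b] =>
  let z := fresh "z" in generalize (@hinner K a b) as z; intro z end.

Definition PH (H0 H1 : Hilbert) : Hilbert.
Proof.
  refine (@Build_Hilbert (H0 * H1) (hzero, hzero) sadd sopp sscal sinner
            _ _ _ _ _ _ _ _ _ _ _ _ _ _);
    try (intros; destruct_pairs; unfold sadd, sopp, sscal; cbn [fst snd]; f_equal;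
         first [apply hadd_assoc | apply hadd_comm | apply hadd_0 | apply hadd_opp
               | apply hscal_1 | apply hscal_assoc | apply hscal_addv | apply hscal_adds]).
  - intros; destruct_pairs; unfold sinner, sadd; cbn [fst snd]. rewrite !hinner_add.
    generalize_inner. unfold Cadd; simpl. apply Cext; ring.
  - intros; destruct_pairs; unfold sinner, sscal; cbn [fst snd]. rewrite !hinner_scal.
    generalize_inner. unfold Cadd, Cmul; simpl. apply Cext; ring.
  - intros [a0 a1] [b0 b1]; unfold sinner; cbn [fst snd].
    rewrite (hinner_conj _ b0 a0), (hinner_conj _ b1 a1).
    generalize_inner. unfold Cadd, Cconj; simpl. apply Cext; ring.
  - intros; destruct_pairs; unfold sinner; cbn [fst snd Re Cadd].
    pose proof (hinner_pos _ h); pose proof (hinner_pos _ h0). lra.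
  - intros [x0 x1] E. unfold sinner in E; cbn [fst snd] in E.
    pose proof (hinner_pos _ x0); pose proof (hinner_pos _ x1).
    assert (E1 : Re (Cadd (hinner x0 x0) (hinner x1 x1)) = 0) by (rewrite E; reflexivity).
    simpl in E1. f_equal; apply nsq_zero; lra.
  - intros u Hu. setoid_rewrite sinner_norm in Hu. setoid_rewrite sinner_norm.
    apply sum_complete. exact Hu.
Defined.

Lemma PH_norm (H0 H1 : Hilbert) (x : PH H0 H1) : @hnorm (PH H0 H1) x = snorm x.
Proof. apply sinner_norm. Qed.

Lemma spectrum_sum_PH (H0 H1 : Hilbert) (T : H0 * H1 -> H0 * H1) (lam : Cplx) :
  spectrum_sum T lam -> @spectrum (PH H0 H1) T lam.
Proof.
  intros Sp [S [Sa [Ss [[M HM] [ST TS]]]]]. apply Sp.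
  exists S. repeat split; auto. exists M. intro y. rewrite <- !(PH_norm H0 H1). apply HM.
Qed.

Lemma opnorm_sum_bound {H0 H1 : Hilbert} (T : H0 * H1 -> H0 * H1) (n : R) :
  (forall a x, T (sscal a x) = sscal a (T x)) -> is_opnorm_sum T n ->
  0 <= n /\ forall x, snorm (T x) <= n * snorm x.
Proof.
  intros Thom [Hub _].
  assert (Unit : forall x, snorm x <= 1 -> snorm (T x) <= n) by (intros x Hx; apply Hub; exists x; auto).
  assert (n0 : 0 <= n).
  { eapply Rle_trans; [apply snorm_nonneg | apply (Unit (hzero, hzero))].
    unfold snorm; cbn [fst snd]. rewrite !norm_zero. replace (0 ^ 2 + 0 ^ 2) with 0 by ring. rewrite sqrt_0. lra. }
  split; [exact n0|]. intro x. destruct (Req_dec (snorm x) 0) as [E|E].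
  - apply snorm_zero_inv in E.
    assert (Z : sscal (mkC 0 0) x = x)
      by (rewrite E; unfold sscal; cbn [fst snd]; f_equal; apply hscal_0).
    rewrite <- Z at 1. rewrite Thom, snorm_scal_real, Rabs_R0.
    pose proof (snorm_nonneg _ _ x). nra.
  - assert (P : 0 < snorm x) by (pose proof (snorm_nonneg _ _ x); lra).
    pose proof (Unit (sscal (mkC (/ snorm x) 0) x)) as U.
    rewrite Thom, !snorm_scal_real, Rabs_right in U by (left; apply Rinv_0_lt_compat; auto).
    rewrite Rinv_l in U by lra. specialize (U (Rle_refl 1)).
    apply (Rmult_le_compat_l (snorm x)) in U; [|lra].
    rewrite <- Rmult_assoc, Rinv_r, Rmult_1_l in U; lra.
Qed.

Lemma distance_split (S0 S1 : Cplx -> Prop) (d : R) (w : Cplx) :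
  is_dist S0 S1 d ->
  (forall mu, S0 mu -> d / 2 <= Cabs (Csub mu w)) \/
  (forall mu, S1 mu -> d / 2 <= Cabs (Csub mu w)).
Proof.
  intros [Hd _]. apply NNPP. intro N. apply not_or_and in N. destruct N as [N0 N1].
  apply not_all_ex_not in N0. destruct N0 as [m0 N0].
  apply not_all_ex_not in N1. destruct N1 as [m1 N1].
  apply imply_to_and in N0. apply imply_to_and in N1.
  destruct N0 as [S0m L0]. destruct N1 as [S1m L1].
  pose proof (Hd m0 m1 S0m S1m). pose proof (Cabs_triangle m0 w m1). lra.
Qed.

(* Moving the spectral parameter off the real axis only increases
   ||(A - z) x|| for symmetric A, so the real-point bound extends to Re z. *)
Lemma selfadjoint_distance_bound_complex {H : Hilbert} (A : H -> H) (z : Cplx) (dl : R) :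
  bounded_selfadjoint A -> 0 < dl ->
  (forall mu, spectrum A mu -> dl <= Cabs (Csub mu (mkC (Re z) 0))) ->
  forall x, dl * hnorm x <= hnorm (shift A z x).
Proof.
  intros hA Hdl hsp x. eapply Rle_trans; [apply (selfadjoint_distance_bound A (Re z) dl hA Hdl hsp)|].
  apply norm_le_of_sq. destruct hA as [_ Asa]. unfold shift. expand. csimpl.
  rewrite (Im_sym H (A x) x), (Im_symmetric A x Asa), (Im_self H x).
  pose proof (hinner_pos H x). nra.
Qed.

Lemma shift_linear {H : Hilbert} (T : H -> H) (lam : Cplx) :
  is_linear T -> is_linear (shift T lam).
Proof.
  intros [Ta Ts]. unfold shift. split.
  - intros x y. rewrite Ta. veq.
  - intros a x. rewrite Ts. apply eq_by_nsq. expand. csimpl. generalize_inner.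
    destruct a, lam. simpl. ring.
Qed.

(* The scalar inequality behind the lower bound for L - z: with s, t the
   component norms, F the norm of (L - z) x, b = ||V|| < dl and tau = |Im z|,
   the two estimates force F >= c (s + t) for an explicit c > 0. *)
Lemma block_lower_bound_real (b dl tau s t F : R) :
  0 <= b -> b < dl -> 0 < tau -> 0 <= s -> 0 <= t -> 0 <= F ->
  dl * s - b * t <= F -> tau * (t * t - s * s) <= F * (s + t) ->
  tau * (s * s - t * t) <= F * (s + t) ->
  (dl - b) * tau / (2 * (tau + b + dl)) * (s + t) <= F.
Proof.
  intros. apply Rmult_le_reg_r with (2 * (tau + b + dl)); [lra|].
  replace ((dl - b) * tau / (2 * (tau + b + dl)) * (s + t) * (2 * (tau + b + dl)))
    with ((dl - b) * tau * (s + t)) by (field; lra).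
  destruct (Rle_lt_dec t s).
  - assert ((dl - b) * s <= F) by nra.
    assert ((dl - b) * tau * (s + t) <= (dl - b) * tau * (2 * s)) by (apply Rmult_le_compat_l; nra).
    nra.
  - assert (tau * (t - s) <= F).
    { apply Rmult_le_reg_r with (s + t); [lra|].
      replace (tau * (t - s) * (s + t)) with (tau * (t * t - s * s)) by ring. lra. }
    assert ((dl - b) * s * tau <= F * (tau + b)) by nra.
    assert ((dl - b) * (tau * (t - s)) <= (dl - b) * F) by (apply Rmult_le_compat_l; lra).
    nra.
Qed.

(** * The block operator L = A + V *)

Section BlockOperator.
Variables (H0 H1 : Hilbert) (A0 : H0 -> H0) (A1 : H1 -> H1) (B : H1 -> H0) (Bs : H0 -> H1).
Hypotheses (hA0 : bounded_selfadjoint A0) (hA1 : bounded_selfadjoint A1)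
  (hB : bounded_op B) (hBs : bounded_op Bs) (hadj : is_adjoint B Bs).

Definition Lshift (z : Cplx) : PH H0 H1 -> PH H0 H1 := @shift (PH H0 H1) (Lop A0 A1 B Bs) z.

Ltac unfold_block :=
  unfold Lshift, shift in *; cbn [hadd hscal hinner PH] in *;
  unfold Lop, sadd, sscal, sinner in *; cbn [fst snd] in *.

Lemma Lop_linear : @is_linear (PH H0 H1) (PH H0 H1) (Lop A0 A1 B Bs).
Proof.
  destruct hA0 as [[[A0a A0s] _] _], hA1 as [[[A1a A1s] _] _].
  destruct hB as [[Ba Bsc] _], hBs as [[Bsa Bss] _].
  split.
  - intros [x0 x1] [y0 y1]. unfold Lop; cbn [hadd PH]. unfold sadd; cbn [fst snd].
    rewrite A0a, A1a, Ba, Bsa. f_equal; veq.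
  - intros a [x0 x1]. unfold Lop; cbn [hscal PH]. unfold sscal; cbn [fst snd].
    rewrite A0s, A1s, Bsc, Bss, hopp_hscal, !hscal_addv. reflexivity.
Qed.

Lemma Lop_bounded : @is_bounded (PH H0 H1) (PH H0 H1) (Lop A0 A1 B Bs).
Proof.
  destruct hA0 as [[_ A0b] _], hA1 as [[_ A1b] _], hB as [_ Bb], hBs as [_ Bsb].
  destruct (bound_nonneg _ A0b) as [M0 [M00 HM0]], (bound_nonneg _ A1b) as [M1 [M10 HM1]].
  destruct (bound_nonneg _ Bb) as [M2 [M20 HM2]], (bound_nonneg _ Bsb) as [M3 [M30 HM3]].
  exists (M0 + M1 + M2 + M3). intros [x0 x1]. rewrite !PH_norm.
  eapply Rle_trans; [apply snorm_le_sum|]. unfold Lop; cbn [fst snd].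
  pose proof (snorm_fst _ _ (x0, x1)). pose proof (snorm_snd _ _ (x0, x1)).
  cbn [fst snd] in *. set (X := snorm (x0, x1)) in *.
  pose proof (norm_triangle _ (A0 x0) (B x1)). pose proof (norm_triangle _ (hopp (Bs x0)) (A1 x1)).
  rewrite norm_opp in *.
  pose proof (HM0 x0). pose proof (HM1 x1). pose proof (HM2 x1). pose proof (HM3 x0).
  pose proof (hnorm_nonneg _ x0). pose proof (hnorm_nonneg _ x1). nra.
Qed.

Lemma Vop_homogeneous (a : Cplx) (x : H0 * H1) : Vop B Bs (sscal a x) = sscal a (Vop B Bs x).
Proof.
  destruct hB as [[_ Bsc] _], hBs as [[_ Bssc] _].
  unfold Vop, sscal; cbn [fst snd]. rewrite Bsc, Bssc, hopp_hscal. reflexivity.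
Qed.

Lemma coupling_bounds (nV : R) : is_opnorm_sum (Vop B Bs) nV ->
  0 <= nV /\ (forall x1, hnorm (B x1) <= nV * hnorm x1) /\
  (forall x0, hnorm (Bs x0) <= nV * hnorm x0).
Proof.
  intro hnV. destruct (opnorm_sum_bound _ nV Vop_homogeneous hnV) as [n0 Hb].
  split; [exact n0|]. split.
  - intro x1. pose proof (Hb (hzero, x1)) as U. rewrite snorm_inr in U.
    eapply Rle_trans; [apply (snorm_fst _ _ (Vop B Bs (hzero, x1)))|exact U].
  - intro x0. pose proof (Hb (x0, hzero)) as U. rewrite snorm_inl in U.
    eapply Rle_trans; [|exact U].
    pose proof (snorm_snd _ _ (Vop B Bs (x0, hzero))) as S. cbn [Vop fst snd] in S.
    rewrite norm_opp in S. exact S.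
Qed.

(* Off-diagonal terms cancel in the imaginary part (J-symmetry of L):
   Re<f0, i x0> - Re<f1, i x1> = Im z (||x1||^2 - ||x0||^2) for f = (L - z) x. *)
Lemma block_imaginary_identity (z : Cplx) (x0 : H0) (x1 : H1) :
  Re (hinner (fst (Lshift z (x0, x1))) (hscal (mkC 0 1) x0)) -
  Re (hinner (snd (Lshift z (x0, x1))) (hscal (mkC 0 1) x1)) =
  Im z * (Re (hinner x1 x1) - Re (hinner x0 x0)).
Proof.
  destruct hA0 as [_ A0sa], hA1 as [_ A1sa]. destruct z as [a tau].
  unfold_block. expand. csimpl.
  rewrite (hadj x1 x0), (Im_sym H1 (Bs x0) x1), (Im_symmetric A0 x0 A0sa),
    (Im_symmetric A1 x1 A1sa), (Im_self H0 x0), (Im_self H1 x1).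
  ring.
Qed.

Lemma block_imaginary_estimate (z : Cplx) (x0 : H0) (x1 : H1) :
  let s := hnorm x0 in let t := hnorm x1 in let F := snorm (Lshift z (x0, x1)) in
  Rabs (Im z) * (t * t - s * s) <= F * (s + t) /\ Rabs (Im z) * (s * s - t * t) <= F * (s + t).
Proof.
  intros s t F. pose proof (block_imaginary_identity z x0 x1) as Iid.
  set (f := Lshift z (x0, x1)) in *.
  rewrite <- (hnorm_sq H0 x0), <- (hnorm_sq H1 x1) in Iid. cbn [pow] in Iid.
  assert (Unit : Re (mkC 0 1) * Re (mkC 0 1) + Im (mkC 0 1) * Im (mkC 0 1) = 1) by (simpl; ring).
  pose proof (cauchy_schwarz _ (fst f) (hscal (mkC 0 1) x0)) as C0.
  pose proof (cauchy_schwarz _ (snd f) (hscal (mkC 0 1) x1)) as C1.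
  rewrite norm_scal, Unit, sqrt_1, Rmult_1_l in C0, C1.
  pose proof (snorm_fst _ _ f). pose proof (snorm_snd _ _ f).
  pose proof (hnorm_nonneg _ (fst f)). pose proof (hnorm_nonneg _ (snd f)).
  pose proof (hnorm_nonneg _ x0). pose proof (hnorm_nonneg _ x1).
  fold s t F in C0, C1, Iid |- *.
  assert (hnorm (fst f) * s <= F * s) by (apply Rmult_le_compat_r; auto).
  assert (hnorm (snd f) * t <= F * t) by (apply Rmult_le_compat_r; auto).
  revert C0 C1. unfold Rabs; repeat destruct Rcase_abs; intros; split; nra.
Qed.

Lemma first_component_estimate (z : Cplx) (dl b : R) (x0 : H0) (x1 : H1) :
  0 < dl -> (forall mu, spectrum A0 mu -> dl <= Cabs (Csub mu (mkC (Re z) 0))) ->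
  (forall v, hnorm (B v) <= b * hnorm v) ->
  dl * hnorm x0 - b * hnorm x1 <= snorm (Lshift z (x0, x1)).
Proof.
  intros Hdl G Bb. pose proof (selfadjoint_distance_bound_complex A0 z dl hA0 Hdl G x0) as L.
  replace (shift A0 z x0) with (hadd (fst (Lshift z (x0, x1))) (hopp (B x1))) in L by (unfold_block; veq).
  pose proof (norm_triangle _ (fst (Lshift z (x0, x1))) (hopp (B x1))).
  rewrite norm_opp in *. pose proof (Bb x1). pose proof (snorm_fst _ _ (Lshift z (x0, x1))). lra.
Qed.

Lemma second_component_estimate (z : Cplx) (dl b : R) (x0 : H0) (x1 : H1) :
  0 < dl -> (forall mu, spectrum A1 mu -> dl <= Cabs (Csub mu (mkC (Re z) 0))) ->
  (forall v, hnorm (Bs v) <= b * hnorm v) ->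
  dl * hnorm x1 - b * hnorm x0 <= snorm (Lshift z (x0, x1)).
Proof.
  intros Hdl G Bsb. pose proof (selfadjoint_distance_bound_complex A1 z dl hA1 Hdl G x1) as L.
  replace (shift A1 z x1) with (hadd (snd (Lshift z (x0, x1))) (Bs x0)) in L by (unfold_block; veq).
  pose proof (norm_triangle _ (snd (Lshift z (x0, x1))) (Bs x0)).
  pose proof (Bsb x0). pose proof (snorm_snd _ _ (Lshift z (x0, x1))). lra.
Qed.

(* Every real point is
   at distance >= d/2 from spec A0 or from spec A1, which gives one diagonal
   estimate; the imaginary-part estimate handles the other component. *)
Lemma block_bounded_below (d nV : R) (z : Cplx) :
  is_dist (spectrum A0) (spectrum A1) d -> 0 < d -> is_opnorm_sum (Vop B Bs) nV ->
  nV < d / 2 -> Im z <> 0 -> bounded_below (Lshift z).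
Proof.
  intros hd hdpos hnV hV hz.
  destruct (coupling_bounds nV hnV) as [b0 [Bb Bsb]].
  set (tau := Rabs (Im z)). assert (tau0 : 0 < tau) by (apply Rabs_pos_lt; exact hz).
  exists ((d / 2 - nV) * tau / (2 * (tau + nV + d / 2))).
  split; [apply Rdiv_lt_0_compat; [apply Rmult_lt_0_compat|]; lra|].
  intros [x0 x1]. rewrite !PH_norm.
  pose proof (hnorm_nonneg _ x0). pose proof (hnorm_nonneg _ x1).
  pose proof (snorm_nonneg _ _ (Lshift z (x0, x1))).
  destruct (block_imaginary_estimate z x0 x1) as [I1 I2].
  eapply Rle_trans.
  { apply Rmult_le_compat_l; [|apply (snorm_le_sum _ _ (x0, x1))].
    left. apply Rdiv_lt_0_compat; [apply Rmult_lt_0_compat|]; lra. }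
  cbn [fst snd].
  destruct (distance_split _ _ d (mkC (Re z) 0) hd) as [G|G].
  - apply block_lower_bound_real; auto; try lra.
    apply (first_component_estimate z); auto; lra.
  - rewrite (Rplus_comm (hnorm x0)). apply block_lower_bound_real; auto; try lra.
    + apply (second_component_estimate z); auto; lra.
    + rewrite Rplus_comm. exact I2.
    + rewrite Rplus_comm. exact I1.
Qed.

Definition flip (e : PH H0 H1) : PH H0 H1 := (fst e, hopp (snd e)).

Lemma flip_involutive (e : PH H0 H1) : flip (flip e) = e.
Proof. destruct e as [e0 e1]. unfold flip; cbn [fst snd]. f_equal. veq. Qed.

Lemma flip_nsq (e : PH H0 H1) : Re (hinner (flip e) (flip e)) = Re (hinner e e).
Proof.
  destruct e as [e0 e1]. unfold flip; cbn [hinner PH]. unfold sinner; cbn [fst snd]. expand. csimpl. ring.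
Qed.

Lemma block_J_adjoint (z : Cplx) (x e : PH H0 H1) :
  Re (hinner (Lshift z x) e) = Re (hinner x (flip (Lshift (Cconj z) (flip e)))).
Proof.
  destruct hA0 as [[A0lin _] A0sa], hA1 as [[A1lin _] A1sa], hB as [Blin _].
  destruct x as [x0 x1], e as [e0 e1].
  unfold flip. unfold_block.
  rewrite (lin_opp B e1), (lin_opp A1 e1) by auto.
  assert (Adj : hinner (Bs x0) e1 = hinner x0 (B e1)).
  { rewrite hinner_conj, <- hadj, <- hinner_conj. reflexivity. }
  expand. rewrite (A0sa x0 e0), (hadj x1 e0), Adj, (A1sa x1 e1). csimpl. ring.
Qed.

(* For Im z <> 0 the range of L - z has trivial orthogonal complement: a vector
   e orthogonal to it gives (L - conj z) J e = 0, hence e = 0 by the lower bound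
   at conj z. *)
Lemma block_range_dense (d nV : R) (z : Cplx) :
  is_dist (spectrum A0) (spectrum A1) d -> 0 < d -> is_opnorm_sum (Vop B Bs) nV ->
  nV < d / 2 -> Im z <> 0 ->
  forall e, (forall x, Re (hinner (Lshift z x) e) = 0) -> e = hzero.
Proof.
  intros hd hdpos hnV hV hz e Ho.
  set (w := Lshift (Cconj z) (flip e)).
  assert (W0 : w = hzero).
  { apply nsq_zero. rewrite <- flip_nsq. rewrite <- (Ho (flip w)), block_J_adjoint. reflexivity. }
  destruct (block_bounded_below d nV (Cconj z) hd hdpos hnV hV) as [c [c0 Hc]].
  { simpl. lra. }
  specialize (Hc (flip e)). fold w in Hc. rewrite W0, norm_zero in Hc.
  pose proof (hnorm_nonneg _ (flip e)).
  assert (F0 : flip e = hzero) by (apply norm_zero_inv; nra).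
  rewrite <- (flip_involutive e), F0. unfold flip; cbn [hzero PH fst snd]. f_equal. veq.
Qed.

End BlockOperator.

Theorem mainTheorem12 (H0 H1 : Hilbert)
  (A0 : H0 -> H0) (A1 : H1 -> H1) (B : H1 -> H0) (Bs : H0 -> H1)
  (hA0 : bounded_selfadjoint A0) (hA1 : bounded_selfadjoint A1)
  (hB : bounded_op B) (hBs : bounded_op Bs) (hadj : is_adjoint B Bs)
  (d : R) (hd : is_dist (spectrum A0) (spectrum A1) d) (hdpos : 0 < d)
  (nV : R) (hnV : is_opnorm_sum (Vop B Bs) nV) (hV : nV < d / 2) :
  forall lam : Cplx, spectrum_sum (Lop A0 A1 B Bs) lam -> Im lam = 0.
Proof.
  intros lam Sp. destruct (Req_dec (Im lam) 0) as [E|E]; [exact E|]. exfalso.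
  assert (Lin : is_linear (Lshift H0 H1 A0 A1 B Bs lam))
    by (apply shift_linear, Lop_linear; assumption).
  assert (Low : bounded_below (Lshift H0 H1 A0 A1 B Bs lam))
    by (apply (block_bounded_below _ _ _ _ _ _ hA0 hA1 hB hBs hadj d nV); assumption).
  assert (Onto : forall y, exists x, Lshift H0 H1 A0 A1 B Bs lam x = y).
  { apply surjective_of_bounded_below; [exact Lin | | exact Low |].
    - apply shift_bounded, Lop_bounded; assumption.
    - apply (block_range_dense _ _ _ _ _ _ hA0 hA1 hB hBs hadj d nV); assumption. }
  exact (not_spectrum_of_bijective _ lam Lin Low Onto (spectrum_sum_PH H0 H1 _ lam Sp)).
Qed.
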